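(* Over profiles whose ballots are strict weak orders (ties allowed), let $f$ be a VCCR satisfying Downward Homogeneity, Coherent Defeat, and Positive Involvement in Defeat. Then $f(\mathbf P)\supseteq sc(\mathbf P)$ for every profile $\mathbf P$.
   Context: Profiles: $\mathbf P:V\to\mathcal W(X)$, $V$ nonempty finite set of voters, $X=X(\mathbf P)$ nonempty finite set of candidates (from fixed infinite sets), $\mathcal W(X)$ the strict weak orders on $X$ (ties allowed). ''Ranks $x$ above $y$'' means strictly. $\mathrm{Margin}_{\mathbf P}(x,y)$ = #voters with $x$ strictly above $y$ minus #voters with $y$ strictly above $x$. Majority path from $x_1$ to $x_n$: $(x_1,\dots,x_n)$ with all $\mathrm{Margin}_{\mathbf P}(x_i,x_{i+1})>0$; strength = minimum of these. VCCR: $f(\mathbf P)$ asymmetric relation on $X(\mathbf P)$. $(x,y)\in sc(\mathbf P)$ iff $\mathrm{Margin}_{\mathbf P}(x,y)>0$ exceeds the strength of every majority path from $y$ to $x$. Downward Homogeneity: $f(\mathbf P)\supseteq f(2\mathbf P)$ where $2\mathbf P$ replaces each voter by two copies. Coherent Defeat: $\mathrm{Margin}_{\mathbf P}(x,y)>0$ and no majority path from $y$ to $x$ imply $(x,y)\in f(\mathbf P)$. Positive Involvement in Defeat: if $(x,y)\notin f(\mathbf P)$ and $\mathbf P'$ adds one new voter whose ballot ranks $y$ strictly above $x$, then $(x,y)\notin f(\mathbf P')$. *)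

From mathcomp Require Import all_boot all_order all_algebra.
From mathcomp Require Import finmap.
Set Implicit Arguments. Unset Strict Implicit. Unset Printing Implicit Defensive.
Import Order.TTheory GRing.Theory Num.Theory.
Local Open Scope fset_scope.
Local Open Scope ring_scope.

Notation voter := nat.
Notation cand := nat.

Definition strict_weak_order (X : {fset cand}) (b : rel cand) : Prop :=
  [/\ (forall x y, b x y -> (x \in X) && (y \in X)),
      (forall x y, x \in X -> y \in X -> b x y -> ~~ b y x) &
      (forall x y z, x \in X -> y \in X -> z \in X ->
          b x z -> b x y || b y z)].

(* A profile P : V -> W(X).  The ballot function is canonical (it is
   false outside V), so a profile is determined by (V, X, ballots). *)
Record profile := Profile {
  pV : {fset voter};
  pX : {fset cand};
  pB : voter -> rel cand;           (* pB i x y : voter i ranks x strictly above y *)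
  pV_ne : pV != fset0;
  pX_ne : pX != fset0;
  pB_swo : forall i, i \in pV -> strict_weak_order pX (pB i);
  pB_out : forall i x y, pB i x y -> i \in pV
}.

Definition margin (P : profile) (x y : cand) : int :=
  \sum_(i <- pV P) ((pB P i x y : nat)%:Z - (pB P i y x : nat)%:Z).

Definition majority_path (P : profile) (x : cand) (s : seq cand) : bool :=
  (s != [::]) && path (fun a b => 0 < margin P a b) x s.

Definition seqmin (l : seq int) : int :=
  if l is m :: ms then foldr Num.min m ms else 0.
Definition path_strength (P : profile) (x : cand) (s : seq cand) : int :=
  seqmin (pairmap (margin P) x s).

Definition sc (P : profile) (x y : cand) : Prop :=
  0 < margin P x y /\
  forall s : seq cand, majority_path P y s -> last y s = x ->
    path_strength P y s < margin P x y.

Definition VCCR (f : profile -> rel cand) : Prop :=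
  forall P, (forall x y, f P x y -> (x \in pX P) && (y \in pX P)) /\
            (forall x y, f P x y -> ~~ f P y x).

(* Q is a profile 2P: each voter of P replaced by two copies (g sends each
   voter of Q to the voter of P it copies). *)
Definition doubled (P Q : profile) : Prop :=
  pX Q = pX P /\
  exists g : voter -> voter,
    (forall j, j \in pV Q -> g j \in pV P /\ pB Q j =2 pB P (g j)) /\
    (forall i, i \in pV P -> #|` [fset j in pV Q | g j == i]| = 2%N).

Definition downward_homogeneity (f : profile -> rel cand) : Prop :=
  forall P Q, doubled P Q -> forall x y, f Q x y -> f P x y.

Definition no_majority_path (P : profile) (y x : cand) : Prop :=
  forall s, majority_path P y s -> last y s <> x.

Definition coherent_defeat (f : profile -> rel cand) : Prop :=
  forall P x y, 0 < margin P x y -> no_majority_path P y x -> f P x y.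

Definition adds_voter (P P' : profile) (i : voter) : Prop :=
  [/\ i \notin pV P, pV P' = i |` pV P, pX P' = pX P &
      forall j, j \in pV P -> pB P' j =2 pB P j].

Definition positive_involvement_in_defeat (f : profile -> rel cand) : Prop :=
  forall P P' i x y, adds_voter P P' i -> pB P' i y x ->
    ~ f P x y -> ~ f P' x y.

From mathcomp Require Import all_boot all_order all_algebra finmap zify.
From Stdlib Require Import ClassicalEpsilon.
Set Implicit Arguments. Unset Strict Implicit. Unset Printing Implicit Defensive.
Import Order.TTheory GRing.Theory Num.Theory.
Local Open Scope fset_scope.
Local Open Scope ring_scope.

(* Let N = Margin(x, y) and let S be the set of candidates reachable from y
   by paths all of whose margins are >= N; by the Split Cycle condition,
   x is not in S, and every margin from S to its complement is < N.
   Consider the profile 2P + (2N - 1) B, where the ballot B ranks the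
   complement of S above y, y above x, and x above the rest of S.  There
   x beats y by exactly 1, and no edge of positive margin leaves S, so
   Coherent Defeat makes x defeat y.  Removing the B voters one at a time
   preserves the defeat by Positive Involvement in Defeat (each ranks y
   above x), and Downward Homogeneity brings it from 2P down to P. *)

Definition vote (B : rel cand) (a c : cand) : int :=
  (B a c : nat)%:Z - (B c a : nat)%:Z.

Lemma margin_seq (Q : profile) (s : seq voter) a c :
  uniq s -> {subset pV Q <= s} -> margin Q a c = \sum_(j <- s) vote (pB Q j) a c.
Proof.
move=> s_uniq sub_s.
have vote_out j : j \notin pV Q -> vote (pB Q j) a c = 0.
  move=> jV; have out u v : pB Q j u v = false by apply: contraNF jV => /pB_out.
  by rewrite /vote !out.
rewrite (bigID (mem (pV Q))) /= [X in _ + X]big1 ?addr0; last by move=> j /vote_out.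
rewrite -big_filter /margin; apply: perm_big; apply: uniq_perm.
- exact: fset_uniq.
- exact: filter_uniq.
- by move=> j; rewrite mem_filter; case: (boolP (j \in pV Q)) => //= /sub_s ->.
Qed.

Lemma marginN (Q : profile) a c : margin Q c a = - margin Q a c.
Proof. by rewrite /margin -sumrN; apply: eq_bigr => i _; rewrite opprB. Qed.

Lemma margin_xx (Q : profile) a : margin Q a a = 0.
Proof. by rewrite /margin big1 // => i _; rewrite subrr. Qed.

Lemma margin_gt0_mem (Q : profile) a c :
  0 < margin Q a c -> (a \in pX Q) && (c \in pX Q).
Proof.
apply: contraTT => ac_out; rewrite -leNgt /margin sumr_le0 // => i _.
suff -> : pB Q i a c = false by rewrite sub0r oppr_le0.
by apply/negP => /[dup] /pB_out /pB_swo [mem_ac _ _] /mem_ac; apply/negP.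
Qed.

Lemma path_strength_ge (Q : profile) (N : int) y s : s != [::] ->
  path (fun a c => N <= margin Q a c) y s -> N <= path_strength Q y s.
Proof.
rewrite /path_strength; case: s => // c s _ /= /andP [+].
move: (margin Q y c) => m le_m; elim: s c => //= d s IH c /andP [le_cd /IH].
by rewrite le_min le_cd.
Qed.

Lemma no_majority_path_closed (Q : profile) (S : pred cand) y x :
  S y -> ~~ S x -> (forall a c, S a -> 0 < margin Q a c -> S c) ->
  no_majority_path Q y x.
Proof.
move=> Sy Sx S_closed s /andP [_]; elim: s y Sy => [|c s IH] y Sy /=.
  by move=> _ yx; rewrite -yx Sy in Sx.
by case/andP=> /(S_closed _ _ Sy) /IH; apply.
Qed.

Lemma sumr_half_double (V : nmodType) (h : nat -> V) m :
  \sum_(0 <= j < m.*2) h j./2 = (\sum_(0 <= i < m) h i) *+ 2.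
Proof.
elim: m => [|m IH]; first by rewrite !big_geq ?mul0rn.
rewrite doubleS !big_nat_recr //= IH uphalf_double doubleK.
by rewrite !mulr2n -addrA addrACA addrA.
Qed.

Definition rank_ballot (X : {fset cand}) (r : cand -> nat) : rel cand :=
  fun a c => [&& a \in X, c \in X & (r a < r c)%N].

Lemma rank_ballot_swo X r : strict_weak_order X (rank_ballot X r).
Proof.
split.
- by move=> a c /and3P [-> ->].
- by move=> a c _ _ /and3P [_ _ ac]; apply/negP => /and3P [_ _ ca]; lia.
- by move=> a c d aX cX dX /and3P [_ _ ad]; rewrite /rank_ballot aX cX dX /=; lia.
Qed.

Section Padding.

Variables (P : profile) (b : rel cand).
Hypothesis b_swo : strict_weak_order (pX P) b.

(* Voter i of P is copied to 2i and 2i+1; the k added voters with ballot b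
   are 2M, ..., 2M + k - 1, where M exceeds every voter of P. *)
Definition voter_bound : nat := (\max_(i <- pV P) i).+1.

Lemma voter_bound_gt i : i \in pV P -> (i < voter_bound)%N.
Proof. by move=> iV; rewrite ltnS (@leq_bigmax_seq _ (pV P : seq nat) xpredT id i iV). Qed.

Definition padded (k j : nat) : bool :=
  (voter_bound.*2 <= j < voter_bound.*2 + k)%N.

Definition pad_voters (k : nat) : {fset voter} :=
  seq_fset tt [seq j <- iota 0 (voter_bound.*2 + k) | (j./2 \in pV P) || padded k j].

Lemma in_pad_voters k j : (j \in pad_voters k) = (j./2 \in pV P) || padded k j.
Proof.
rewrite seq_fsetE mem_filter mem_iota /padded.
case: (boolP (j./2 \in pV P)) => [/voter_bound_gt|] /=; lia.
Qed.

Definition pad_ballot (k j : nat) : rel cand :=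
  if j./2 \in pV P then pB P j./2 else if padded k j then b else fun _ _ => false.

Lemma pad_ballot_swo k i :
  i \in pad_voters k -> strict_weak_order (pX P) (pad_ballot k i).
Proof.
rewrite in_pad_voters /pad_ballot; case: ifP => [/pB_swo //|_ /= ->].
exact: b_swo.
Qed.

Lemma pad_ballot_out k i a c : pad_ballot k i a c -> i \in pad_voters k.
Proof. by rewrite in_pad_voters /pad_ballot; case: ifP => // _; case: ifP. Qed.

Lemma pad_voters_neq0 k : pad_voters k != fset0.
Proof.
case/fset0Pn: (pV_ne P) => i iV; apply/fset0Pn; exists i.*2.
by rewrite in_pad_voters doubleK iV.
Qed.

Definition pad (k : nat) : profile :=
  Profile (pad_voters_neq0 k) (pX_ne P) (@pad_ballot_swo k) (@pad_ballot_out k).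

Lemma pad_ballot_old k j : (j < voter_bound.*2)%N -> pad_ballot k j =2 pB P j./2.
Proof.
move=> j_old a c; rewrite /pad_ballot /padded; case: ifP => // jV.
rewrite ifF; last by lia.
by apply/esym/negP => /pB_out; rewrite jV.
Qed.

Lemma pad_ballot_new k j : j./2 \notin pV P -> padded k j -> pad_ballot k j = b.
Proof. by rewrite /pad_ballot => /negbTE -> ->. Qed.

Lemma new_voter_notin k : (voter_bound.*2 + k)./2 \notin pV P.
Proof. by apply/negP => /voter_bound_gt; lia. Qed.

Lemma margin_pad k a c : margin (pad k) a c = margin P a c *+ 2 + vote b a c *+ k.
Proof.
rewrite (@margin_seq (pad k) (index_iota 0 (voter_bound.*2 + k))); first last.
- by move=> j; rewrite /= in_pad_voters mem_index_iota /padded => /orP [/voter_bound_gt|]; lia.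
- exact: iota_uniq.
rewrite (@big_cat_nat _ _ _ voter_bound.*2) ?leq_addr //=.
rewrite (@eq_big_nat _ _ _ 0 _ _ (fun j => vote (pB P j./2) a c)); last first.
  by move=> j /andP [_ j_old]; rewrite /vote /= !pad_ballot_old.
rewrite (sumr_half_double (fun i => vote (pB P i) a c)).
rewrite -(@margin_seq P (index_iota 0 voter_bound)); first last.
- by move=> j /voter_bound_gt; rewrite mem_index_iota.
- exact: iota_uniq.
congr (_ + _); rewrite (@eq_big_nat _ _ _ _ _ _ (fun _ => vote b a c)).
  by rewrite sumr_const_nat addKn.
move=> j j_new; rewrite /= pad_ballot_new // /padded.
by apply/negP => /voter_bound_gt; lia.
Qed.

Lemma doubled_pad0 : doubled P (pad 0).
Proof.
split => //; exists half; split.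
- move=> j; rewrite in_pad_voters /padded => jV.
  have jV2 : j./2 \in pV P by case/orP: jV => //; lia.
  by split => // a c; rewrite /= /pad_ballot jV2.
- move=> i iV; rewrite (_ : [fset j in _ | _] = [fset i.*2; i.*2.+1]).
    by rewrite cardfs2; case: eqP; lia.
  apply/fsetP => j; rewrite !inE /= in_pad_voters /padded.
  case: (eqVneq j./2 i) => [ji|]; last by rewrite andbF; lia.
  by rewrite ji iV /=; lia.
Qed.

Lemma adds_voter_pad k : adds_voter (pad k) (pad k.+1) (voter_bound.*2 + k).
Proof.
have notin := new_voter_notin k.
split => //=.
- by rewrite in_pad_voters (negbTE notin) /padded; lia.
- apply/fsetP => j; rewrite in_fset1U !in_pad_voters.
  case: (eqVneq j (voter_bound.*2 + k)) => [->|nj] /=.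
    by rewrite (negbTE notin) /padded; lia.
  by rewrite /padded; lia.
- move=> j; rewrite in_pad_voters => jV a c; rewrite /pad_ballot.
  by case: ifP jV => //= _ jk; rewrite jk ifT //; move: jk; rewrite /padded; lia.
Qed.

Lemma pad_new_voter k : pB (pad k.+1) (voter_bound.*2 + k) = b.
Proof. by rewrite /= pad_ballot_new ?new_voter_notin // /padded; lia. Qed.

Lemma pad_defeat_descends f k x y :
  downward_homogeneity f -> positive_involvement_in_defeat f ->
  b y x -> f (pad k) x y -> f P x y.
Proof.
move=> DH PID byx; elim: k => [|k IH] fxy; first exact: DH doubled_pad0 _ _ fxy.
apply: IH; apply: contraT => /negP nfxy.
by case: (PID _ _ _ _ _ (adds_voter_pad k) _ nfxy); rewrite ?pad_new_voter.
Qed.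

End Padding.

Lemma sc_cut P x y : sc P x y ->
  exists S : pred cand,
    [/\ S y, ~~ S x & forall a c, S a -> ~~ S c -> margin P a c < margin P x y].
Proof.
move=> [xy_gt0 sc_xy]; set N := margin P x y.
pose reach z := exists s, path (fun a c => N <= margin P a c) y s /\ last y s = z.
exists (fun z => if excluded_middle_informative (reach z) then true else false).
split; rewrite /=.
- by case: excluded_middle_informative => // -[]; exists [::].
- case: excluded_middle_informative => //= -[s [strong_s last_s]].
  have s_nil : s != [::].
    by apply: contraTneq xy_gt0 => s0; rewrite /N -last_s s0 margin_xx ltxx.
  have maj_s : majority_path P y s.
    by rewrite /majority_path s_nil; apply: sub_path strong_s => a c /(lt_le_trans xy_gt0).
  by have := sc_xy s maj_s last_s; rewrite ltNge path_strength_ge.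
- move=> a c; case: excluded_middle_informative => //= -[s [strong_s last_s]] _.
  case: excluded_middle_informative => //= not_reach _; rewrite ltNge.
  apply/negP => strong_ac; apply: not_reach; exists (rcons s c).
  by rewrite rcons_path strong_s last_s last_rcons.
Qed.

Section CutBallot.

Variables (P : profile) (x y : cand) (S : pred cand) (N : nat).
Hypotheses (Sy : S y) (Sx : ~~ S x) (N_gt0 : (0 < N)%N).
Hypothesis margin_xy : margin P x y = N%:Z.
Hypothesis margin_cut : forall a c, S a -> ~~ S c -> margin P a c < N%:Z.

(* A smaller rank means a higher position on the ballot. *)
Definition cut_rank (z : cand) : nat :=
  if z == x then 2%N else if z == y then 1%N else if S z then 3%N else 0%N.

Definition cut_ballot : rel cand := rank_ballot (pX P) cut_rank.

Let x_neq_y : x != y.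
Proof. by apply: contraNneq Sx => ->. Qed.

Let xy_mem : (x \in pX P) && (y \in pX P).
Proof. by apply: margin_gt0_mem; rewrite margin_xy ltz_nat. Qed.

Let rank_x : cut_rank x = 2%N.
Proof. by rewrite /cut_rank eqxx. Qed.

Let rank_y : cut_rank y = 1%N.
Proof. by rewrite /cut_rank eq_sym (negbTE x_neq_y) eqxx. Qed.

Lemma cut_ballot_yx : cut_ballot y x.
Proof.
by case/andP: xy_mem => xX yX; rewrite /cut_ballot /rank_ballot xX yX rank_x rank_y.
Qed.

Lemma vote_cut_ballot a c : S a -> ~~ S c -> (a, c) != (y, x) ->
  a \in pX P -> c \in pX P -> vote cut_ballot a c = -1.
Proof.
move=> Sa Sc ac_yx aX cX.
have [a_x c_y] : a != x /\ c != y.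
  by split; [apply: contraNneq Sx => <- | apply: contraNneq Sc => ->].
suff rank_ca : (cut_rank c < cut_rank a)%N.
  by rewrite /vote /cut_ballot /rank_ballot aX cX rank_ca ltnNge ltnW.
move: ac_yx; rewrite /cut_rank xpair_eqE (negbTE a_x) (negbTE c_y) (negbTE Sc) Sa.
by case: (a == y); case: (c == x).
Qed.

Definition cut_profile : profile := pad (rank_ballot_swo (pX P) cut_rank) N.*2.-1.

Lemma margin_cut_profile_xy : margin cut_profile x y = 1.
Proof.
have byx := cut_ballot_yx.
have nbxy : cut_ballot x y = false by rewrite /cut_ballot /rank_ballot rank_x rank_y !andbF.
rewrite /cut_profile margin_pad -/cut_ballot margin_xy /vote byx nbxy /=; lia.
Qed.

(* The 2N - 1 cut_ballot voters outvote every edge leaving S: 2 (N - 1) < 2N - 1. *)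
Lemma cut_profile_closed a c : S a -> 0 < margin cut_profile a c -> S c.
Proof.
move=> Sa ac_gt0; have /andP [aX cX] := margin_gt0_mem ac_gt0.
apply: contraT => Sc; move: ac_gt0.
case: (eqVneq (a, c) (y, x)) => [[-> ->]|ac_yx].
  by rewrite marginN margin_cut_profile_xy.
have := margin_cut Sa Sc.
by rewrite /cut_profile margin_pad -/cut_ballot vote_cut_ballot //; lia.
Qed.

End CutBallot.

Theorem theorem7p8 (f : profile -> rel cand) :
  VCCR f -> downward_homogeneity f -> coherent_defeat f ->
  positive_involvement_in_defeat f ->
  forall (P : profile) (x y : cand), sc P x y -> f P x y.
Proof.
move=> _ DH CD PID P x y sc_xy.
have [S [Sy Sx margin_cut]] := sc_cut sc_xy.
have [N margin_xy N_gt0] : exists2 N : nat, margin P x y = N%:Z & (0 < N)%N.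
  by case: sc_xy => + _; case: (margin P x y) => // N; rewrite ltz_nat; exists N.
rewrite margin_xy in margin_cut.
have cut_defeat : f (cut_profile P x y S N) x y.
  apply: CD; first by rewrite (margin_cut_profile_xy Sy Sx N_gt0 margin_xy).
  exact: no_majority_path_closed Sy Sx (cut_profile_closed Sy Sx N_gt0 margin_xy margin_cut).
exact: pad_defeat_descends DH PID (cut_ballot_yx Sy Sx N_gt0 margin_xy) cut_defeat.
Qed.
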